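(* Let $\varphi\neq0$ and $\phi$ be real numbers with $\sin^2\phi\neq1$, and $$M_A=\begin{pmatrix} i\cosh\varphi & e^{i\phi}\sinh\varphi\\ e^{-i\phi}\sinh\varphi & -i\cosh\varphi\end{pmatrix},\qquad M_B=\begin{pmatrix} i&0\\0&-i\end{pmatrix}.$$ Let $M_1,M_2,\dots$ be independent random matrices, each equal to $M_A$ or $M_B$ with probability $1/2$, and write $\Pi_n=M_1\cdots M_n=\begin{pmatrix}\alpha_n&\beta_n\\ \beta_n^*&\alpha_n^*\end{pmatrix}$. Then there is a constant $g>0$ (depending on $\varphi,\phi$) such that $$\mathbb{E}\left(\log|\alpha_n-\beta_n|\right)\sim g\sqrt{n}\qquad\text{as } n\to\infty .$$
   Context: $\mathbb{E}$ denotes expectation over the random choices of $M_1,\dots,M_n$. (Physically, $\frac{c}{3}\mathbb{E}(\log|\alpha_n-\beta_n|)$ is the averaged entanglement entropy growth of half of a randomly driven CFT of central charge $c$ at a type I exceptional point.) *)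

From HB Require Import structures.
From mathcomp Require Import all_boot all_order all_algebra.
From mathcomp Require Import all_classical all_reals all_analysis.
From mathcomp Require Import complex.
Set Implicit Arguments. Unset Strict Implicit. Unset Printing Implicit Defensive.
Import Order.TTheory GRing.Theory Num.Theory.
Local Open Scope ring_scope.
Local Open Scope complex_scope.

Definition cabs (R : realType) (z : R[i]) : R := ComplexField.Normc.normc z.

Definition coshR (R : realType) (x : R) : R := (expR x + expR (- x)) / 2.
Definition sinhR (R : realType) (x : R) : R := (expR x - expR (- x)) / 2.

Definition cexpi (R : realType) (t : R) : R[i] := cos t +i* sin t.

Definition MA (R : realType) (vp ph : R) : 'M[R[i]]_2 :=
  \matrix_(i < 2, j < 2)
    if (i == 0) && (j == 0) then 'i * (coshR vp)%:C
    else if (i == 0) && (j == 1) then cexpi ph * (sinhR vp)%:C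
    else if (i == 1) && (j == 0) then cexpi (- ph) * (sinhR vp)%:C
    else - 'i * (coshR vp)%:C.

Definition MB (R : realType) : 'M[R[i]]_2 :=
  \matrix_(i < 2, j < 2)
    if (i == 0) && (j == 0) then 'i
    else if (i == 1) && (j == 1) then - 'i
    else 0.

(* Pi_n = M_1 ... M_n for the choice sequence s (true = M_A, false = M_B);
   \prod over ordinals multiplies in increasing index order. *)
Definition Pi (R : realType) (vp ph : R) (n : nat) (s : {ffun 'I_n -> bool})
  : 'M[R[i]]_2 :=
  \prod_(k < n) (if s k then MA vp ph else MB R).

Definition alpha (R : realType) (vp ph : R) n (s : {ffun 'I_n -> bool}) : R[i] :=
  Pi vp ph s 0 0.
Definition beta (R : realType) (vp ph : R) n (s : {ffun 'I_n -> bool}) : R[i] :=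
  Pi vp ph s 0 1.

(* E(log|alpha_n - beta_n|): the M_k are independent, each M_A or M_B with
   probability 1/2, so the law of (M_1,...,M_n) is uniform on the 2^n choice
   sequences and the expectation is the uniform average. *)
Definition Elog (R : realType) (vp ph : R) (n : nat) : R :=
  (2 ^+ n)^-1 * \sum_(s : {ffun 'I_n -> bool})
      ln (cabs (alpha vp ph s - beta vp ph s)).

From HB Require Import structures.
From mathcomp Require Import all_boot all_order all_algebra.
From mathcomp Require Import all_classical all_reals all_analysis.
From mathcomp Require Import complex.
From mathcomp Require Import ring lra zify.
Import Order.TTheory GRing.Theory Num.Theory.
Import numFieldNormedType.Exports.
Local Open Scope classical_set_scope.
Local Open Scope ring_scope.
Set Implicit Arguments. Unset Strict Implicit. Unset Printing Implicit Defensive.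

(* Up to a sign, the first row (alpha_n, beta_n) of Pi_n depends only on the
   position S_n = 2k + p (p in {0, 1}) of a simple +-1 random walk driven by the
   choices, and |alpha_n - beta_n|^2 = cosh(2k vp) -+ sin ph sinh(2k vp).  As
   |sin ph| < 1 this lies between constant multiples of exp(2|k vp|), so
   E log|alpha_n - beta_n| = |vp|/2 E|S_n| + O(1).  Since
   E|S_(n+1)| = E|S_n| + P(S_n = 0), E|S_n| = n C(2m, m) / 4^m with m = n/2, and
   the Wallis inequalities, obtained from the decreasing integrals of sin^k over
   [0, pi/2], give pi (E|S_n|)^2 = 2n + O(1).  Hence g = |vp| / sqrt(2 pi). *)

Section ChoiceSequences.
Variable T : finType.

Definition fbelast n (s : {ffun 'I_n.+1 -> T}) : {ffun 'I_n -> T} :=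
  [ffun k => s (widen_ord (leqnSn n) k)].

Definition frcons n (s : {ffun 'I_n -> T}) (b : T) : {ffun 'I_n.+1 -> T} :=
  [ffun k => if unlift ord_max k is Some j then s j else b].

Lemma widen_ord_lift_max n (k : 'I_n) : widen_ord (leqnSn n) k = lift ord_max k.
Proof. by apply: val_inj; rewrite /= /bump leqNgt ltn_ord. Qed.

Lemma fbelast_rcons n (s : {ffun 'I_n -> T}) b : fbelast (frcons s b) = s.
Proof. by apply/ffunP => k; rewrite !ffunE widen_ord_lift_max liftK. Qed.

Lemma frcons_last n (s : {ffun 'I_n -> T}) b : frcons s b ord_max = b.
Proof. by rewrite ffunE unlift_none. Qed.

Lemma frcons_belast n (s : {ffun 'I_n.+1 -> T}) : frcons (fbelast s) (s ord_max) = s.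
Proof.
apply/ffunP => k; rewrite ffunE; case: unliftP => [j ->|->] //.
by rewrite ffunE widen_ord_lift_max.
Qed.

Lemma big_ffunS (V : nmodType) n (h : {ffun 'I_n.+1 -> T} -> V) :
  \sum_(s : {ffun 'I_n.+1 -> T}) h s =
  \sum_(s : {ffun 'I_n -> T}) \sum_(b : T) h (frcons s b).
Proof.
rewrite (reindex (fun p : {ffun 'I_n -> T} * T => frcons p.1 p.2)) /=.
  by rewrite pair_big.
exists (fun s => (fbelast s, s ord_max)) => [[s b] _|s _] /=.
  by rewrite fbelast_rcons frcons_last.
by rewrite frcons_belast.
Qed.

End ChoiceSequences.

Lemma sum_ord2 (V : nmodType) (F : 'I_2 -> V) : \sum_(k < 2) F k = F 0 + F 1.
Proof. by rewrite big_ord_recl big_ord1; congr (F _ + F _); apply: val_inj. Qed.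

(* (k, p) encodes the walk position 2k + p: the first row of Pi_n is
   determined by k and the parity p. *)
Definition walk_step (st : int * bool) (b : bool) : int * bool :=
  let: (k, p) := st in
  if p then (if b then (k + 1, false) else (k, false))
  else (if b then (k - 1, true) else (k, true)).

Definition walk_pos (st : int * bool) : int := 2 * st.1 + (nat_of_bool st.2)%:Z.

Fixpoint walk n : {ffun 'I_n -> bool} -> int * bool :=
  match n return {ffun 'I_n -> bool} -> int * bool with
  | 0 => fun _ => (0, false)
  | n'.+1 => fun s => walk_step (walk (fbelast s)) (s ord_max)
  end.

Lemma walk_step_sum (V : nmodType) (f : int -> V) st :
  f (walk_pos (walk_step st true)) + f (walk_pos (walk_step st false)) =
  f (walk_pos st + 1) + f (walk_pos st - 1).
Proof.
case: st => k [] /=; rewrite /walk_pos /=; first by congr (f _ + f _); lia.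
by rewrite addrC; congr (f _ + f _); lia.
Qed.

Lemma sum_walk_pos (V : nmodType) n (f : int -> V) :
  \sum_(s : {ffun 'I_n -> bool}) f (walk_pos (walk s)) =
  \sum_(j < n.+1) f (2 * (j : nat)%:Z - (n : nat)%:Z) *+ 'C(n, j).
Proof.
elim: n f => [|n IH] f.
  by rewrite big_ord1 /= sumr_const card_ffun card_ord card_bool.
rewrite big_ffunS.
under eq_bigr => s _ do rewrite big_bool /= !fbelast_rcons !frcons_last walk_step_sum.
rewrite (IH (fun z => f (z + 1) + f (z - 1))).
under eq_bigr => j _ do rewrite mulrnDl.
rewrite big_split /= [RHS]big_ord_recl /= bin0.
under [in RHS]eq_bigr => j _ do rewrite /bump leq0n add1n binS mulrnDr.
rewrite big_split /= [X in _ = _ + X]addrC [RHS]addrCA; congr (_ + _).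
  by apply: eq_bigr => j _; congr (f _ *+ _); lia.
rewrite big_ord_recl /= bin0 big_ord_recr /= bin_small // mulr0n addr0.
congr (f _ *+ _ + _); first lia.
by apply: eq_bigr => j _; rewrite /bump leq0n add1n; congr (f _ *+ _); lia.
Qed.

Section AbsWalk.
Variable R : realFieldType.

Definition mean_abs_walk n : R :=
  (2 ^+ n)^-1 * \sum_(s : {ffun 'I_n -> bool}) `|(walk_pos (walk s))%:~R : R|.

Definition return_prob m : R := 'C(m.*2, m)%:R / 4 ^+ m.

Lemma normr_intr_step (x : int) :
  `|(x + 1)%:~R : R| + `|(x - 1)%:~R| = 2 * `|x%:~R| + 2 * (x == 0)%:R.
Proof.
rewrite rmorphD rmorphB /= !rmorph1.
case: (ltrgt0P x) => [x_gt0|x_lt0|->].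
- have : 1 <= (x%:~R : R) by rewrite -[1 : R]/(1%:~R) ler_int.
  by move=> ?; rewrite !ger0_norm /=; lra.
- have : (x%:~R : R) <= -1 by rewrite -[-1 : R]/((-1)%:~R) ler_int; lia.
  by move=> ?; rewrite !ler0_norm /=; lra.
- by rewrite /= add0r sub0r normrN normr1 normr0; lra.
Qed.

Lemma mean_abs_walkS n : mean_abs_walk n.+1 = mean_abs_walk n +
  (\sum_(s : {ffun 'I_n -> bool}) ((walk_pos (walk s) == 0)%:R : R)) / 2 ^+ n.
Proof.
rewrite /mean_abs_walk big_ffunS.
under eq_bigr => s _ do
  rewrite big_bool /= !fbelast_rcons !frcons_last
    (walk_step_sum (fun z : int => `|z%:~R : R|)) normr_intr_step.
rewrite big_split /= -!mulr_sumr exprS.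
by field; rewrite expf_neq0.
Qed.

Lemma sum_walk_pos_eq0_even m :
  \sum_(s : {ffun 'I_m.*2 -> bool}) ((walk_pos (walk s) == 0)%:R : R) = 'C(m.*2, m)%:R.
Proof.
have m_lt : (m < m.*2.+1)%N by rewrite ltnS -addnn leq_addr.
rewrite (sum_walk_pos _ (fun z => (z == 0)%:R)) (bigD1 (Ordinal m_lt)) //= big1 ?addr0.
  by have -> : 2 * (m%:Z) - (m.*2)%:Z = 0 by lia.
move=> j j_neq; suff /negbTE -> : 2 * (j : nat)%:Z - (m.*2)%:Z != 0 by rewrite mul0rn.
by apply: contra j_neq => /eqP ?; apply/eqP/val_inj => /=; lia.
Qed.

Lemma sum_walk_pos_eq0_odd m :
  \sum_(s : {ffun 'I_m.*2.+1 -> bool}) ((walk_pos (walk s) == 0)%:R : R) = 0.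
Proof.
rewrite (sum_walk_pos _ (fun z => (z == 0)%:R)) big1 // => j _.
suff /negbTE -> : 2 * (j : nat)%:Z - (m.*2.+1)%:Z != 0 by rewrite mul0rn.
by apply/eqP; lia.
Qed.

Lemma bin_central_succ m :
  ('C(m.*2.+2, m.+1) * m.+1 * m.+1 = m.*2.+2 * m.*2.+1 * 'C(m.*2, m))%N.
Proof.
have := mul_bin_diag m.*2.+2 m; have := mul_bin_diag m.*2.+1 m.
have := mul_bin_left m.*2.+1 m.
have -> : (m.*2.+1 - m = m.+1)%N by rewrite -addnn; lia.
by move=> /= *; nia.
Qed.

Lemma return_probS m :
  return_prob m.+1 = return_prob m * (m.*2.+1)%:R / (m.*2.+2)%:R.
Proof.
have binS : 'C(m.*2.+2, m.+1)%:R =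
    (m.*2.+2 * m.*2.+1 * 'C(m.*2, m))%:R / (m.+1)%:R ^+ 2 :> R.
  by rewrite -bin_central_succ !natrM; field; rewrite ?expf_neq0 ?pnatr_eq0.
rewrite /return_prob doubleS binS [4 ^+ _.+1]exprS -!mul2n.
have : 0 <= (m%:R : R) := ler0n _ _.
by move=> ?; field; rewrite ?expf_neq0 //; apply/andP; split; apply: lt0r_neq0; lra.
Qed.

Lemma mean_abs_walk_ge0 n : 0 <= mean_abs_walk n.
Proof. by rewrite mulr_ge0 ?invr_ge0 ?exprn_ge0 ?sumr_ge0. Qed.

Lemma return_prob_gt0 m : 0 < return_prob m.
Proof. by rewrite divr_gt0 ?exprn_gt0 ?ltr0n ?bin_gt0 // -addnn leq_addr. Qed.

Lemma mean_abs_walk_double m :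
  mean_abs_walk m.*2 = (m.*2)%:R * return_prob m /\
  mean_abs_walk m.*2.+1 = (m.*2.+1)%:R * return_prob m.
Proof.
have four k : (2 : R) ^+ k.*2 = 4 ^+ k.
  by rewrite -mul2n exprM; congr (_ ^+ _); rewrite expr2; lra.
have oddS k : mean_abs_walk k.*2.+1 = mean_abs_walk k.*2 + return_prob k.
  by rewrite mean_abs_walkS sum_walk_pos_eq0_even /return_prob four.
have evenS k : mean_abs_walk k.+1.*2 = mean_abs_walk k.*2.+1.
  by rewrite doubleS mean_abs_walkS sum_walk_pos_eq0_odd mul0r addr0.
elim: m => [|m [_ IHo]].
  have mean0 : mean_abs_walk 0 = 0.
    by rewrite /mean_abs_walk big1 ?mulr0 // => s _; rewrite /walk_pos /= normr0.
  by rewrite oddS mean0 add0r mul0r mul1r.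
have IHe : mean_abs_walk m.+1.*2 = (m.+1.*2)%:R * return_prob m.+1.
  rewrite evenS IHo return_probS -!mul2n.
  have : 0 <= (m%:R : R) := ler0n _ _.
  by move=> ?; field; apply: lt0r_neq0; lra.
split=> //; rewrite oddS IHe -[(m.+1.*2).+1]addn1 natrD; ring.
Qed.
End AbsWalk.

Section Wallis.
Variable R : realType.

(* A primitive of [sin ^+ n], built from the reduction formula
   n F_n = - sin^(n-1) cos + (n-1) F_(n-2); it gives the Wallis integrals
   without any integration theory. *)
Fixpoint sin_pow_prim n : R -> R :=
  match n with
  | 0 => id
  | 1 => - cos
  | n'.+2 => (- (n'.+2)%:R^-1) \*: (sin ^+ n'.+1 * cos) +
             ((n'.+1)%:R / (n'.+2)%:R) \*: sin_pow_prim n'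
  end.

Lemma is_derive_sin_pow_prim n (x : R) : is_derive x 1 (sin_pow_prim n) (sin x ^+ n).
Proof.
suff : is_derive x 1 (sin_pow_prim n) (sin x ^+ n) /\
       is_derive x 1 (sin_pow_prim n.+1) (sin x ^+ n.+1) by case.
elim: n => [|n [IH1 IH2]].
  split; first by rewrite expr0; exact: is_derive_id.
  by rewrite /= expr1; apply: is_derive_eq; rewrite opprK.
split=> //; apply: is_derive_eq.
rewrite exprfctE /= /GRing.scale /=.
have n2_neq0 : (n.+2%:R : R) != 0 by rewrite pnatr_eq0.
apply/eqP; rewrite -subr_eq0; apply/eqP.
rewrite -[RHS](mulr0 (- ((n.+1)%:R / (n.+2)%:R) * sin x ^+ n)) -(subrr 1).
rewrite -{3}(cos2Dsin2 x) !exprS.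
by field.
Qed.

Definition wallis_int n : R := sin_pow_prim n (pi / 2) - sin_pow_prim n 0.

Lemma wallis_int0 : wallis_int 0 = pi / 2.
Proof. by rewrite /wallis_int /= subr0. Qed.

Lemma wallis_int1 : wallis_int 1 = 1.
Proof. by rewrite /wallis_int /= !fctE cos_pihalf cos0; lra. Qed.

Lemma wallis_intSS n : wallis_int n.+2 = (n.+1)%:R / (n.+2)%:R * wallis_int n.
Proof.
rewrite /wallis_int /= !fctE /GRing.scale /= cos_pihalf sin0 expr0n /=.
by rewrite /GRing.scale /=; ring.
Qed.

Lemma le_wallis_intS n : wallis_int n.+1 <= wallis_int n.
Proof.
pose G : R -> R := sin_pow_prim n - sin_pow_prim n.+1.
have dG (x : R) : is_derive x 1 G (sin x ^+ n - sin x ^+ n.+1).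
  by apply: is_deriveB; exact: is_derive_sin_pow_prim.
have pi2_gt0 : 0 < pi / 2 :> R by rewrite divr_gt0 ?pi_gt0.
have cG : {within `[0, pi / 2], continuous G}.
  apply: continuous_subspaceT => x.
  by apply/differentiable_continuous/derivable1_diffP; apply: ex_derive; exact: dG.
have [c c_in G_mvt] := MVT pi2_gt0 (fun x _ => dG x) cG.
have sinc_ge0 : 0 <= sin c.
  move: c_in; rewrite in_itv /= => /andP [c_gt0 c_lt].
  by apply: sin_ge0_pi; rewrite ltW //=; have := pi_gt0 R; lra.
have : 0 <= (sin c ^+ n - sin c ^+ n.+1) * (pi / 2 - 0).
  apply: mulr_ge0; last by rewrite subr0 ltW.
  by rewrite exprS subr_ge0 ler_piMl ?exprn_ge0 ?sin_le1.
by rewrite -G_mvt /G /wallis_int !fctE; lra.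
Qed.

Lemma wallis_int_return_prob m :
  wallis_int m.*2 = return_prob R m * (pi / 2) /\
  wallis_int m.*2.+1 = ((m.*2.+1)%:R * return_prob R m)^-1.
Proof.
elim: m => [|m [IHe IHo]].
  by rewrite /= wallis_int0 wallis_int1 /return_prob /= expr0 divr1 !mul1r invr1.
have := return_prob_gt0 R m; have : 0 <= (m%:R : R) := ler0n _ _.
move=> m_ge0 p_gt0; rewrite doubleS !wallis_intSS IHe IHo return_probS -!mul2n.
by split; field; rewrite ?gt_eqF //; apply/and3P; split; apply: lt0r_neq0; lra.
Qed.

Lemma wallis_lower m : 2 <= pi * return_prob R m ^+ 2 * (m.*2.+1)%:R.
Proof.
have [We Wo] := wallis_int_return_prob m.
have p_gt0 := return_prob_gt0 R m; have pi_gt0 := pi_gt0 R.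
have m_gt0 : 0 < ((m.*2.+1)%:R : R) by rewrite ltr0n.
move: (le_wallis_intS m.*2); rewrite We Wo -[_^-1]mulr1 ler_pdivrMl; last exact: mulr_gt0.
by move=> ?; nra.
Qed.

Lemma wallis_upper m : pi * return_prob R m.+1 ^+ 2 * (m.+1)%:R <= 1.
Proof.
have [_ Wo] := wallis_int_return_prob m.
have [We _] := wallis_int_return_prob m.+1.
have p_gt0 := return_prob_gt0 R m.+1; have pi_gt0 := pi_gt0 R.
have m_gt0 : 0 < ((m.+1)%:R : R) by rewrite ltr0n.
have p_shift : (m.*2.+1)%:R * return_prob R m = (m.+1)%:R * 2 * return_prob R m.+1.
  rewrite return_probS -!mul2n; have : 0 <= (m%:R : R) := ler0n _ _.
  by move=> ?; field; apply: lt0r_neq0; lra.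
move: (le_wallis_intS m.*2.+1); rewrite -doubleS We Wo p_shift.
rewrite -[(_ * _)^-1]mulr1 ler_pdivlMl; last by apply: mulr_gt0 => //; lra.
by move=> ?; nra.
Qed.

End Wallis.

Section MeanAbsWalkAsymptotics.
Variable R : realType.

Lemma return_prob0 : return_prob R 0 = 1.
Proof. by rewrite /return_prob expr0 divr1. Qed.

Lemma pi_le4 : pi <= 4 :> R.
Proof.
have := wallis_upper R 0; rewrite return_probS return_prob0 double0 mul1r mulr1.
by have := pi_gt0 R; move=> ? ?; nra.
Qed.

Lemma mean_abs_walk_sqr n : `|pi * mean_abs_walk R n ^+ 2 - 2 * n%:R| <= 4.
Proof.
have pi_gt0 := pi_gt0 R; have pi_le4 := pi_le4.
rewrite -(odd_double_half n); set m := n./2.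
have [Me Mo] := mean_abs_walk_double R m.
have low := wallis_lower R m.
have up : (0 < m)%N -> pi * return_prob R m ^+ 2 * m%:R <= 1.
  by case: (m) => // k _; exact: wallis_upper.
have p_gt0 := return_prob_gt0 R m.
have m_ge0 : 0 <= (m%:R : R) := ler0n _ _.
have m2 : ((m.*2)%:R : R) = 2 * m%:R by rewrite -mul2n natrM.
have m21 : ((m.*2.+1)%:R : R) = 2 * m%:R + 1 by rewrite -addn1 natrD m2.
rewrite ler_norml; case: (posnP m) => [m0 | m_gt0].
  by case: (odd n); rewrite /= ?add1n ?add0n ?Mo ?Me ?m21 ?m2 m0 mulr0n return_prob0;
    apply/andP; split; nra.
have {}up := up m_gt0; have m_ge1 : 1 <= (m%:R : R) by rewrite ler1n.
case: (odd n); rewrite /= ?add1n ?add0n ?Mo ?Me ?m21 ?m2 in low *;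
  apply/andP; split; nra.
Qed.

Lemma mean_abs_walk_rate n : (0 < n)%N ->
  `|Num.sqrt (pi / 2) * mean_abs_walk R n / Num.sqrt n%:R - 1| <= 2 / Num.sqrt n%:R.
Proof.
move=> n_gt0; set q : R := Num.sqrt n%:R; set y : R := Num.sqrt (pi / 2) * _ / q.
have n_ge1 : 1 <= (n%:R : R) by rewrite ler1n.
have q_gt0 : 0 < q by rewrite sqrtr_gt0; lra.
have q2 : q ^+ 2 = n%:R by rewrite sqr_sqrtr //; lra.
have y_ge0 : 0 <= y.
  by rewrite /y divr_ge0 ?sqrtr_ge0 // mulr_ge0 ?sqrtr_ge0 ?mean_abs_walk_ge0.
have y2 : y ^+ 2 - 1 = (pi * mean_abs_walk R n ^+ 2 - 2 * n%:R) / (2 * q ^+ 2).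
  rewrite /y expr_div_n exprMn sqr_sqrtr ?divr_ge0 ?pi_ge0 // -q2.
  by field; rewrite gt_eqF.
have : `|y ^+ 2 - 1| * (2 * q ^+ 2) <= 4.
  rewrite y2 normrM normfV (ger0_norm (ltW (mulr_gt0 _ (exprn_gt0 2 q_gt0)))) //.
  by rewrite mulfVK ?mean_abs_walk_sqr // gt_eqF // mulr_gt0 // exprn_gt0.
have : `|y - 1| <= `|y ^+ 2 - 1|.
  rewrite (_ : y ^+ 2 - 1 = (y - 1) * (y + 1)); last by ring.
  by rewrite normrM ler_peMr ?normr_ge0 // ger0_norm; lra.
have q_ge1 : 1 <= q by nra.
rewrite ler_pdivlMr //; have := normr_ge0 (y ^+ 2 - 1); nra.
Qed.

End MeanAbsWalkAsymptotics.

Section RealFunctions.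
Variable R : realType.
Implicit Types x : R.

Lemma coshRN x : coshR (- x) = coshR x.
Proof. by rewrite /coshR opprK addrC. Qed.

Lemma sinhRN x : sinhR (- x) = - sinhR x.
Proof. by rewrite /sinhR opprK -mulNr opprB. Qed.

Lemma coshR0 : coshR 0 = 1 :> R.
Proof. by rewrite /coshR oppr0 expR0; lra. Qed.

Lemma sinhR0 : sinhR 0 = 0 :> R.
Proof. by rewrite /sinhR oppr0 subrr mul0r. Qed.

Lemma coshRD x y : coshR (x + y) = coshR x * coshR y + sinhR x * sinhR y.
Proof. by rewrite /coshR /sinhR opprD !expRD; field. Qed.

Lemma sinhRD x y : sinhR (x + y) = sinhR x * coshR y + coshR x * sinhR y.
Proof. by rewrite /coshR /sinhR opprD !expRD; field. Qed.

Lemma normr_sinhR_le x : `|sinhR x| <= coshR x.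
Proof.
rewrite /sinhR /coshR ler_norml; have := expR_gt0 x; have := expR_gt0 (- x).
by move=> ? ?; apply/andP; split; lra.
Qed.

Lemma coshR_bounds x : expR `|x| / 2 <= coshR x <= expR `|x|.
Proof.
rewrite /coshR; have := expR_gt0 x; have := expR_gt0 (- x).
case: (lerP 0 x) => [x_ge0|x_lt0]; [rewrite ger0_norm // | rewrite ltr0_norm //].
- have : expR (- x) <= expR x by rewrite ler_expR; lra.
  by move=> ? ? ?; apply/andP; split; lra.
- have : expR x <= expR (- x) by rewrite ler_expR; lra.
  by move=> ? ? ?; apply/andP; split; lra.
Qed.

Lemma normr_sin_le1 x : `|sin x| <= 1.
Proof.
by rewrite -(expr_le1 (n := 2)) ?normr_ge0 // real_normK ?num_real //
  sin2cos2 lerBlDr lerDl sqr_ge0.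
Qed.

Lemma ln_sqrt x : 0 < x -> ln (Num.sqrt x) = ln x / 2.
Proof.
move=> x_gt0; have /(lnXn 2) : 0 < Num.sqrt x by rewrite sqrtr_gt0.
by rewrite sqr_sqrtr ?ltW // => ->; rewrite mulr2n; field.
Qed.

Lemma cvg_sqrt_rate (u : R^nat) (l K : R) :
  (forall n, (0 < n)%N -> `|u n - l| <= K / Num.sqrt n%:R) -> u @ \oo --> l.
Proof.
move=> u_rate; apply/cvgrPdist_lt => e e_gt0.
near=> n.
have n_gt : (K / e) ^+ 2 < n%:R.
  apply: lt_le_trans (truncnS_gt _) _; rewrite ler_nat.
  by near: n; exact: nbhs_infty_gt.
have n_gt0 : (0 < n)%N by rewrite -(ltr_nat R); apply: le_lt_trans n_gt; exact: sqr_ge0.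
have q_gt0 : 0 < Num.sqrt (n%:R : R) by rewrite sqrtr_gt0 ltr0n.
rewrite distrC; apply: le_lt_trans (u_rate n n_gt0) _.
rewrite ltr_pdivrMr //; case: (lerP K 0) => K_le0; first by nra.
have Ke_gt0 : 0 < K / e by rewrite divr_gt0.
have : K / e < Num.sqrt n%:R.
  have : Num.sqrt (n%:R : R) ^+ 2 = n%:R by rewrite sqr_sqrtr ?ler0n.
  by nra.
by rewrite ltr_pdivrMr //; nra.
Unshelve. all: by end_near.
Qed.

End RealFunctions.

Local Open Scope complex_scope.

Lemma cabs_signr (R : realType) (e : bool) (z : R[i]) : cabs ((-1) ^+ e * z) = cabs z.
Proof.
case: e; rewrite ?expr0 ?mul1r // expr1 mulN1r.
by case: z => a b; rewrite /cabs; simpc; rewrite /ComplexField.Normc.normc !sqrrN.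
Qed.

Section FirstRow.
Variables (R : realType) (vp ph : R).
Local Notation C := (cos ph).
Local Notation S := (sin ph).

Definition choice_mx (b : bool) : 'M[R[i]]_2 := if b then MA vp ph else MB R.

Lemma MA00 : MA vp ph 0 0 = 0 +i* coshR vp.
Proof. by rewrite mxE /=; simpc. Qed.
Lemma MA01 : MA vp ph 0 1 = (C * sinhR vp) +i* (S * sinhR vp).
Proof. by rewrite mxE /= /cexpi; simpc. Qed.
Lemma MA10 : MA vp ph 1 0 = (C * sinhR vp) +i* (- (S * sinhR vp)).
Proof. by rewrite mxE /= /cexpi cosN sinN; simpc. Qed.
Lemma MA11 : MA vp ph 1 1 = 0 +i* (- coshR vp).
Proof. by rewrite mxE /=; simpc. Qed.
Lemma MB00 : MB R 0 0 = 0 +i* 1.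
Proof. by rewrite mxE. Qed.
Lemma MB01 : MB R 0 1 = 0.
Proof. by rewrite mxE. Qed.
Lemma MB10 : MB R 1 0 = 0.
Proof. by rewrite mxE. Qed.
Lemma MB11 : MB R 1 1 = 0 +i* (-1).
Proof. by rewrite mxE /=; simpc. Qed.

Definition row_state (st : int * bool) : R[i] * R[i] :=
  let x := st.1%:~R * vp in
  if st.2 then (0 +i* coshR x, (- (C * sinhR x)) +i* (- (S * sinhR x)))
  else (coshR x +i* 0, (S * sinhR x) +i* (- (C * sinhR x))).

Lemma eq_by_cos2Dsin2 (x y k : R) : x - y = k * (C ^+ 2 + S ^+ 2 - 1) -> x = y.
Proof. by rewrite cos2Dsin2 subrr mulr0 => /eqP; rewrite subr_eq0 => /eqP. Qed.

Lemma row_state_step st b : exists e : bool,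
  (row_state st).1 * choice_mx b 0 0 + (row_state st).2 * choice_mx b 1 0 =
    (-1) ^+ e * (row_state (walk_step st b)).1 /\
  (row_state st).1 * choice_mx b 0 1 + (row_state st).2 * choice_mx b 1 1 =
    (-1) ^+ e * (row_state (walk_step st b)).2.
Proof.
case: st => k p; set x := k%:~R * vp.
have xS : (k + 1)%:~R * vp = x + vp by rewrite rmorphD mulrDl mul1r.
have xP : (k - 1)%:~R * vp = x + - vp by rewrite rmorphB mulrBl mul1r.
case: p; case: b; rewrite /row_state /choice_mx /walk_step /= -/x
  ?MA00 ?MA01 ?MA10 ?MA11 ?MB00 ?MB01 ?MB10 ?MB11 ?xS ?xP
  ?coshRD ?sinhRD ?coshRN ?sinhRN.
- exists true; rewrite expr1 !mulN1r; simpc.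
  split; congr (_ +i* _); try ring.
  by apply: (eq_by_cos2Dsin2 (k := - (sinhR x * sinhR vp))); ring.
- by exists true; rewrite expr1 !mulN1r; simpc; split; congr (_ +i* _); ring.
- exists false; rewrite expr0 !mul1r; simpc.
  split; congr (_ +i* _); try ring.
  by apply: (eq_by_cos2Dsin2 (k := - (sinhR x * sinhR vp))); ring.
- by exists false; rewrite expr0 !mul1r; simpc; split; congr (_ +i* _); ring.
Qed.

Lemma PiS n (s : {ffun 'I_n.+1 -> bool}) :
  Pi vp ph s = Pi vp ph (fbelast s) * choice_mx (s ord_max).
Proof.
rewrite /Pi big_ord_recr /=; congr (_ * _).
by apply: eq_bigr => k _; rewrite ffunE.
Qed.

Lemma Pi_first_row n (s : {ffun 'I_n -> bool}) : exists e : bool,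
  Pi vp ph s 0 0 = (-1) ^+ e * (row_state (walk s)).1 /\
  Pi vp ph s 0 1 = (-1) ^+ e * (row_state (walk s)).2.
Proof.
elim: n s => [|n IH] s.
  exists false; rewrite /Pi big_ord0 /row_state /= mul0r coshR0 sinhR0 expr0 !mul1r.
  by rewrite !mxE /=; split; apply/eqP; rewrite eq_complex /= ?mulr0 ?oppr0 !eqxx.
have [e [s0 s1]] := IH (fbelast s).
have [e' [t0 t1]] := row_state_step (walk (fbelast s)) (s ord_max).
exists (e (+) e'); rewrite signr_addb -!mulrA.
by rewrite PiS !mxE !sum_ord2 s0 s1 -!mulrA -!mulrDr t0 t1.
Qed.

Definition row_diff_sqr (st : int * bool) : R :=
  let y := 2 * (st.1%:~R * vp) in coshR y + (if st.2 then S else - S) * sinhR y.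

Lemma cabs_row_state st :
  cabs ((row_state st).1 - (row_state st).2) = Num.sqrt (row_diff_sqr st).
Proof.
case: st => k p; rewrite /row_state /row_diff_sqr /=; set x := k%:~R * vp.
rewrite mulr2n mulrDl mul1r coshRD sinhRD /cabs.
by case: p; simpc; rewrite /ComplexField.Normc.normc; congr Num.sqrt;
  apply: (eq_by_cos2Dsin2 (k := sinhR x ^+ 2)); ring.
Qed.

Lemma row_diff_sqr_bounds st :
  (1 - `|S|) / 2 * expR `|2 * (st.1%:~R * vp)| <= row_diff_sqr st <=
  2 * expR `|2 * (st.1%:~R * vp)|.
Proof.
case: st => k p; rewrite /row_diff_sqr /=; set y := 2 * _.
have S_le1 := normr_sin_le1 ph.
have /andP [ch_ge ch_le] := coshR_bounds y.
have sh_le := normr_sinhR_le y.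
have : `|(if p then S else - S) * sinhR y| <= `|S| * coshR y.
  by rewrite normrM (fun_if Num.norm) normrN if_same ler_wpM2l.
rewrite ler_norml => /andP [lo hi].
have := normr_ge0 S; have := normr_ge0 (sinhR y).
by move=> *; apply/andP; split; nra.
Qed.

End FirstRow.

Lemma walk_pos_norm_error (R : realFieldType) (a : R) st :
  `| `|a| / 2 * `|(walk_pos st)%:~R : R| - `|st.1%:~R * a| | <= `|a| / 2.
Proof.
have pos_err : `| `|(walk_pos st)%:~R : R| - 2 * `|st.1%:~R : R| | <= 1.
  rewrite -!intr_norm -[2 : R]/(2%:~R) -rmorphM -rmorphB -intr_norm.
  by rewrite -[1 : R]/(1%:~R) ler_int /walk_pos; lia.
have -> : `|a| / 2 * `|(walk_pos st)%:~R : R| - `|st.1%:~R * a| =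
    `|a| / 2 * (`|(walk_pos st)%:~R : R| - 2 * `|st.1%:~R : R|).
  by rewrite normrM; field.
by rewrite normrM ger0_norm ?divr_ge0 // ler_piMr ?divr_ge0.
Qed.

Section LogModulus.
Variables (R : realType) (vp ph : R).
Hypothesis sin_ph_neq1 : sin ph ^+ 2 != 1.

Lemma normr_sin_lt1 : `|sin ph| < 1.
Proof.
have : sin ph ^+ 2 < 1 by rewrite lt_neqAle sin_ph_neq1 sin2cos2 lerBlDr lerDl sqr_ge0.
by rewrite -real_normK ?num_real // expr_lt1 ?normr_ge0.
Qed.

Definition log_error : R := (ln 2 - ln ((1 - `|sin ph|) / 2)) / 2 + `|vp| / 2.

Lemma ln_cabs_row_state st :
  `|ln (cabs ((row_state vp ph st).1 - (row_state vp ph st).2)) -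
    `|vp| / 2 * `|(walk_pos st)%:~R : R| | <= log_error.
Proof.
have c_pos : (1 - `|sin ph|) / 2 \is Num.pos.
  by rewrite posrE divr_gt0 // subr_gt0 normr_sin_lt1.
have two_pos : (2 : R) \is Num.pos by rewrite posrE.
have /andP [lo hi] := row_diff_sqr_bounds vp ph st.
set Q := row_diff_sqr _ _ _ in lo hi *; set y := 2 * _ in lo hi.
have e_pos : expR `|y| \is Num.pos by rewrite posrE expR_gt0.
have Q_pos : Q \is Num.pos by apply: lt_le_trans lo; rewrite -posrE rpredM.
rewrite cabs_row_state ln_sqrt //.
have lnQ_lo : ln ((1 - `|sin ph|) / 2) + `|y| <= ln Q.
  by rewrite -[`|y|]expRK -lnM // (ler_ln (rpredM c_pos e_pos) Q_pos).
have lnQ_hi : ln Q <= ln 2 + `|y|.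
  by rewrite -[`|y|]expRK -lnM // (ler_ln Q_pos (rpredM two_pos e_pos)).
have ln2_ge0 : 0 <= ln (2 : R) by rewrite ln_ge0 // ler1n.
have lnc_le0 : ln ((1 - `|sin ph|) / 2) <= 0.
  by rewrite ln_le0 // ler_pdivrMr // mul1r lerBlDr; have := normr_ge0 (sin ph); lra.
have y_eq : `|y| = 2 * `|st.1%:~R * vp| by rewrite normrM ger0_norm.
have := walk_pos_norm_error vp st; rewrite /log_error !ler_norml.
by move=> /andP [? ?]; apply/andP; split; lra.
Qed.

Lemma Elog_walk n : Elog vp ph n = (2 ^+ n)^-1 * \sum_(s : {ffun 'I_n -> bool})
  ln (cabs ((row_state vp ph (walk s)).1 - (row_state vp ph (walk s)).2)).
Proof.
congr (_ * _); apply: eq_bigr => s _.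
have [e [alphaE betaE]] := Pi_first_row vp ph s.
rewrite /alpha /beta alphaE betaE.
by rewrite -mulrBr cabs_signr.
Qed.

Lemma Elog_mean_abs_walk n : `|Elog vp ph n - `|vp| / 2 * mean_abs_walk R n| <= log_error.
Proof.
have inv_ge0 : 0 <= (2 ^+ n)^-1 :> R by rewrite invr_ge0 exprn_ge0.
have -> : Elog vp ph n - `|vp| / 2 * mean_abs_walk R n = (2 ^+ n)^-1 *
    \sum_(s : {ffun 'I_n -> bool}) (ln (cabs ((row_state vp ph (walk s)).1 -
      (row_state vp ph (walk s)).2)) - `|vp| / 2 * `|(walk_pos (walk s))%:~R|).
  by rewrite Elog_walk /mean_abs_walk sumrB -mulr_sumr; ring.
rewrite normrM ger0_norm //; apply: le_trans (ler_wpM2l inv_ge0 (ler_norm_sum _ _ _)) _.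
apply: le_trans (ler_wpM2l inv_ge0 (ler_sum _ (fun s _ => ln_cabs_row_state (walk s)))) _.
rewrite sumr_const card_ffun card_bool card_ord -[_ *+ 2 ^ n]mulr_natr natrX.
by rewrite mulrCA mulVf ?mulr1 // expf_neq0.
Qed.

End LogModulus.

Local Close Scope complex_scope.
Unset Implicit Arguments.

Theorem mainTheorem7 (R : realType) (vp ph : R) :
  vp != 0 -> sin ph ^+ 2 != 1 ->
  exists g : R, 0 < g /\
    (fun n : nat => Elog vp ph n / (g * Num.sqrt (n%:R))) @ \oo --> (1 : R).
Proof.
move=> vp_neq0 sin_ph_neq1.
set r := Num.sqrt (pi / 2 : R).
have r_gt0 : 0 < r by rewrite sqrtr_gt0 divr_gt0 ?pi_gt0.
pose g := `|vp| / (2 * r).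
have g_gt0 : 0 < g by rewrite divr_gt0 ?normr_gt0 ?mulr_gt0.
exists g; split => //.
apply: (@cvg_sqrt_rate R _ _ (2 + log_error vp ph / g)) => n n_gt0.
set q := Num.sqrt n%:R; have q_gt0 : 0 < q by rewrite sqrtr_gt0 ltr0n.
have -> : Elog vp ph n / (g * q) - 1 = (r * mean_abs_walk R n / q - 1) +
    (Elog vp ph n - `|vp| / 2 * mean_abs_walk R n) / (g * q).
  by rewrite /g; field; rewrite !gt_eqF ?normr_gt0.
rewrite [(2 + _) / q]mulrDl.
apply: le_trans (ler_normD _ _) (lerD (mean_abs_walk_rate R n_gt0) _).
rewrite normrM normfV (gtr0_norm (mulr_gt0 g_gt0 q_gt0)) invfM mulrA.
by rewrite !ler_pM2r ?invr_gt0 //; exact: Elog_mean_abs_walk.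
Qed.
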